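(* Let $G$ be a nonabelian group and let $\psi,\psi'\in\operatorname{End}(G)$ satisfy $\psi([G,G])\le Z(G)$, $\psi'([G,G])\le Z(G)$, and $[\psi(G),\psi'(G)]\subseteq Z(G)$. For $\alpha,\beta\in\mathscr{E}$ define binary operations on $G$ by \[g\circ_\alpha h=g\,\psi_\alpha(g)\,h\,\psi_\alpha(g)^{-1},\qquad g\star_\beta h=g\,\psi'_\beta(g)\,h\,\psi'_\beta(g)^{-1},\] where $\psi_\alpha=\psi\circ\alpha$ and $\psi'_\beta=\psi'\circ\beta$. Then $(G,\circ_\alpha,\star_\beta)$ is a skew left brace.
   Context: $Z(G)$ is the center and $[G,G]$ the commutator subgroup; $[\psi(G),\psi'(G)]$ is the subgroup generated by commutators $xyx^{-1}y^{-1}$ with $x\in\psi(G)$, $y\in\psi'(G)$. $\mathscr{E}$ denotes the set of formal expressions $\alpha=n_1\phi_1+\cdots+n_t\phi_t$ with $t\ge0$, $n_i\in\mathbb Z$, $\phi_i\in\operatorname{End}(G)$ (the free group on $\operatorname{End}(G)$, written additively), acting on $G$ by $\alpha(g)=\phi_1(g^{n_1})\cdots\phi_t(g^{n_t})$. A skew left brace is a triple $(B,\cdot,\circ)$ where $(B,\cdot)$ and $(B,\circ)$ are groups and $a\circ(b\cdot c)=(a\circ b)\cdot a^{-1}\cdot(a\circ c)$ for all $a,b,c\in B$, where $a^{-1}$ is the inverse of $a$ in $(B,\cdot)$. Here $(G,\circ_\alpha)$ plays the role of $(B,\cdot)$ and $(G,\star_\beta)$ the role of $(B,\circ)$. *)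

From Stdlib Require Import ZArith List.
Import ListNotations.
Set Implicit Arguments.

Record Grp := {
  carrier :> Type;
  gmul : carrier -> carrier -> carrier;
  gone : carrier;
  ginv : carrier -> carrier;
  gmulA : forall x y z, gmul x (gmul y z) = gmul (gmul x y) z;
  gmul1l : forall x, gmul gone x = x;
  gmul1r : forall x, gmul x gone = x;
  gmulVl : forall x, gmul (ginv x) x = gone;
  gmulVr : forall x, gmul x (ginv x) = gone
}.

Section GroupNotions.
Context {G : Grp}.

Definition is_endo (f : G -> G) : Prop :=
  forall x y : G, f (gmul G x y) = gmul G (f x) (f y).

Definition is_abelian : Prop := forall x y : G, gmul G x y = gmul G y x.
Definition in_center (x : G) : Prop := forall y : G, gmul G x y = gmul G y x.

Definition comm (x y : G) : G :=
  gmul G (gmul G (gmul G x y) (ginv G x)) (ginv G y).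

Inductive gen (S : G -> Prop) : G -> Prop :=
| gen_in : forall x, S x -> gen S x
| gen_one : gen S (gone G)
| gen_mul : forall x y, gen S x -> gen S y -> gen S (gmul G x y)
| gen_inv : forall x, gen S x -> gen S (ginv G x).

Definition derived : G -> Prop := gen (fun z => exists x y, z = comm x y).

Definition comm_images (psi psi' : G -> G) : G -> Prop :=
  gen (fun z => exists a b, z = comm (psi a) (psi' b)).

Fixpoint npow (g : G) (n : nat) : G :=
  match n with O => gone G | S m => gmul G g (npow g m) end.
Definition zpow (g : G) (n : Z) : G :=
  match n with
  | Z0 => gone G
  | Zpos p => npow g (Pos.to_nat p)
  | Zneg p => ginv G (npow g (Pos.to_nat p))
  end.

(* formal expressions alpha = n_1 phi_1 + ... + n_t phi_t, phi_i endomorphisms;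
   represented by the list [(n_1,phi_1); ...; (n_t,phi_t)] *)
Definition expr_ok (alpha : list (Z * (G -> G))) : Prop :=
  Forall (fun p => is_endo (snd p)) alpha.

Fixpoint expr_act (alpha : list (Z * (G -> G))) (g : G) : G :=
  match alpha with
  | [] => gone G
  | (n, phi) :: rest => gmul G (phi (zpow g n)) (expr_act rest g)
  end.

Definition brace_op (psi : G -> G) (alpha : list (Z * (G -> G))) (g h : G) : G :=
  let k := psi (expr_act alpha g) in
  gmul G (gmul G (gmul G g k) h) (ginv G k).

End GroupNotions.

Record is_group_op (T : Type) (op : T -> T -> T) (e : T) (inv : T -> T) : Prop := {
  op_assoc : forall x y z, op x (op y z) = op (op x y) z;
  op_id_l : forall x, op e x = x;
  op_id_r : forall x, op x e = x;
  op_inv_l : forall x, op (inv x) x = e;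
  op_inv_r : forall x, op x (inv x) = e
}.

Definition is_group_law (T : Type) (op : T -> T -> T) : Prop :=
  exists e inv, is_group_op op e inv.

Definition skew_left_brace (T : Type) (dot circ : T -> T -> T) : Prop :=
  exists e inv, is_group_op dot e inv /\ is_group_law circ /\
    forall a b c, circ a (dot b c) = dot (dot (circ a b) (inv a)) (circ a c).

From Stdlib Require Import ZArith List Setoid Morphisms.

(* Both operations have the form g . h = g (k g) h (k g)^-1, with k = psi o alpha
   resp. k = psi' o beta.  Since alpha is a homomorphism modulo [G,G] and psi maps
   [G,G] into the centre, conjugation by k g depends only on the image of g in
   G/[G,G], and g |-> conjugation by k g is a homomorphism G -> Inn G.  This alone
   makes (G, .) a group.  The brace identity then reduces to the two conjugation
   actions commuting, which is the hypothesis [psi(G), psi'(G)] <= Z(G). *)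

Section SkewBraces.
Context {G : Grp}.
Local Notation "x ** y" := (gmul G x y) (at level 40, left associativity).
Local Notation "x ^-1" := (ginv G x) (at level 9, format "x ^-1").
Local Notation "1" := (gone G).
Implicit Types x y z a b c d g h k l : G.

Lemma mulKVg x y : x ** (x^-1 ** y) = y.
Proof. rewrite gmulA, gmulVr, gmul1l; reflexivity. Qed.

Lemma mulKg x y : x^-1 ** (x ** y) = y.
Proof. rewrite gmulA, gmulVl, gmul1l; reflexivity. Qed.

Lemma invg_uniq x y : x ** y = 1 -> y = x^-1.
Proof. intro Hxy. rewrite <- (mulKg x y), Hxy, gmul1r. reflexivity. Qed.

Lemma invMg x y : (x ** y)^-1 = y^-1 ** x^-1.
Proof.
  symmetry. apply invg_uniq.
  rewrite <- gmulA, (gmulA _ y), gmulVr, gmul1l, gmulVr. reflexivity.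
Qed.

Lemma invgK x : (x^-1)^-1 = x.
Proof. symmetry. apply invg_uniq, gmulVl. Qed.

Lemma invg1 : 1^-1 = 1.
Proof. symmetry. apply invg_uniq, gmul1l. Qed.

Hint Rewrite invMg invgK invg1 mulKVg mulKg gmulVr gmulVl gmul1l gmul1r : grp.
Hint Rewrite <- gmulA : grp.
Ltac gsimpl := autorewrite with grp; try reflexivity.

Lemma endo1 f : is_endo f -> f 1 = 1.
Proof.
  intro Hf. rewrite <- (mulKg (f 1) (f 1)), <- Hf, gmul1l, gmulVl. reflexivity.
Qed.

Lemma endoV f x : is_endo f -> f x^-1 = (f x)^-1.
Proof. intro Hf. apply invg_uniq. rewrite <- Hf, gmulVr. apply endo1, Hf. Qed.

Definition conj k h : G := k ** h ** k^-1.

Lemma conj_mul k a b : conj k (a ** b) = conj k a ** conj k b.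
Proof. unfold conj; gsimpl. Qed.

Lemma conj_by_mul k l h : conj (k ** l) h = conj k (conj l h).
Proof. unfold conj; gsimpl. Qed.

Lemma conj_by1 h : conj 1 h = h.
Proof. unfold conj; gsimpl. Qed.

Lemma conj_byKV k h : conj k (conj k^-1 h) = h.
Proof. unfold conj; gsimpl. Qed.

Lemma conj_by_central z k h : in_center z -> conj (z ** k) h = conj k h.
Proof.
  intro Hz. transitivity (z ** conj k h ** z^-1); [unfold conj; gsimpl|].
  rewrite Hz. gsimpl.
Qed.

Lemma conj_by_comm x y h : in_center (comm x y) -> conj x (conj y h) = conj y (conj x h).
Proof.
  intro Hc. rewrite <- !conj_by_mul.
  replace (x ** y) with (comm x y ** (y ** x)) by (unfold comm; gsimpl).
  apply conj_by_central, Hc.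
Qed.

Lemma brace_opE psi (al : list (Z * (G -> G))) g h :
  brace_op psi al g h = g ** conj (psi (expr_act al g)) h.
Proof. unfold brace_op, conj. gsimpl. Qed.

Lemma derived_comm a b : derived (comm a b).
Proof. apply gen_in. exists a, b. reflexivity. Qed.

Lemma derived_conj k d : derived d -> derived (conj k d).
Proof.
  induction 1 as [x [a [b ->]]| |x y _ IHx _ IHy|x _ IHx].
  - replace (conj k (comm a b)) with (comm (conj k a) (conj k b))
      by (unfold comm, conj; gsimpl).
    apply derived_comm.
  - replace (conj k 1) with 1 by (unfold conj; gsimpl). apply gen_one.
  - rewrite conj_mul. apply gen_mul; assumption.
  - replace (conj k x^-1) with ((conj k x)^-1) by (unfold conj; gsimpl).
    apply gen_inv, IHx.
Qed.

Lemma derived_endo f d : is_endo f -> derived d -> derived (f d).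
Proof.
  intros Hf. induction 1 as [x [a [b ->]]| |x y _ IHx _ IHy|x _ IHx].
  - unfold comm. rewrite !Hf, !(endoV f _ Hf). apply derived_comm.
  - rewrite endo1 by exact Hf. apply gen_one.
  - rewrite Hf. apply gen_mul; assumption.
  - rewrite endoV by exact Hf. apply gen_inv, IHx.
Qed.

Definition eq_mod_derived x y : Prop := derived (x ** y^-1).
Local Infix "≡" := eq_mod_derived (at level 70).

Global Instance eq_mod_derived_equiv : Equivalence eq_mod_derived.
Proof.
  split; unfold eq_mod_derived.
  - intro x. rewrite gmulVr. apply gen_one.
  - intros x y Hxy. replace (y ** x^-1) with ((x ** y^-1)^-1) by gsimpl.
    apply gen_inv, Hxy.
  - intros x y z Hxy Hyz.
    replace (x ** z^-1) with ((x ** y^-1) ** (y ** z^-1)) by gsimpl.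
    apply gen_mul; assumption.
Qed.

Global Instance gmul_eq_mod_derived :
  Proper (eq_mod_derived ==> eq_mod_derived ==> eq_mod_derived) (gmul G).
Proof.
  intros x x' Hx y y' Hy. unfold eq_mod_derived in *.
  replace (x ** y ** (x' ** y')^-1) with (conj x (y ** y'^-1) ** (x ** x'^-1))
    by (unfold conj; gsimpl).
  apply gen_mul; [apply derived_conj|]; assumption.
Qed.

Global Instance ginv_eq_mod_derived : Proper (eq_mod_derived ==> eq_mod_derived) (ginv G).
Proof.
  intros x y Hxy. unfold eq_mod_derived in *.
  replace (x^-1 ** y^-1^-1) with (conj x^-1 ((x ** y^-1)^-1)) by (unfold conj; gsimpl).
  apply derived_conj, gen_inv, Hxy.
Qed.

Lemma eq_mod_derived_mulC x y : x ** y ≡ y ** x.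
Proof.
  unfold eq_mod_derived.
  replace (x ** y ** (y ** x)^-1) with (comm x y) by (unfold comm; gsimpl).
  apply derived_comm.
Qed.

Lemma eq_mod_derived_mulACA a b c d : a ** b ** (c ** d) ≡ a ** c ** (b ** d).
Proof.
  rewrite <- !gmulA, (gmulA _ b c), (gmulA _ c b), (eq_mod_derived_mulC b c).
  reflexivity.
Qed.

Lemma eq_mod_derived_conj k h : conj k h ≡ h.
Proof. apply derived_comm. Qed.

Lemma conj_by_endo_eq_mod_derived psi x y h :
  is_endo psi -> (forall d, derived d -> in_center (psi d)) ->
  x ≡ y -> conj (psi x) h = conj (psi y) h.
Proof.
  intros Hpsi Hcen Hxy. replace x with ((x ** y^-1) ** y) by gsimpl.
  rewrite Hpsi. apply conj_by_central, Hcen, Hxy.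
Qed.

Record hom_mod_derived (f : G -> G) : Prop := {
  hom_mod_derivedM : forall x y, f (x ** y) ≡ f x ** f y;
  hom_mod_derived_proper : Proper (eq_mod_derived ==> eq_mod_derived) f
}.

Lemma hom_mod_derived1 f : hom_mod_derived f -> f 1 ≡ 1.
Proof.
  intros [HfM _].
  assert (Hff : f 1 ≡ f 1 ** f 1) by (rewrite <- HfM, gmul1l; reflexivity).
  rewrite <- (mulKg (f 1) (f 1)), <- Hff, gmulVl. reflexivity.
Qed.

Lemma endo_hom_mod_derived f : is_endo f -> hom_mod_derived f.
Proof.
  intro Hf. split.
  - intros x y. rewrite Hf. reflexivity.
  - intros x y Hxy. unfold eq_mod_derived in *.
    rewrite <- endoV, <- Hf by exact Hf. apply derived_endo; assumption.
Qed.

Lemma hom_mod_derived_comp f f' :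
  hom_mod_derived f -> hom_mod_derived f' -> hom_mod_derived (fun g => f (f' g)).
Proof.
  intros [HfM Hf] [Hf'M Hf']. split.
  - intros x y. rewrite (Hf _ _ (Hf'M x y)). apply HfM.
  - intros x y Hxy. apply Hf, Hf', Hxy.
Qed.

Lemma hom_mod_derived_pmul f f' :
  hom_mod_derived f -> hom_mod_derived f' -> hom_mod_derived (fun g => f g ** f' g).
Proof.
  intros [HfM Hf] [Hf'M Hf']. split.
  - intros x y. rewrite HfM, Hf'M. apply eq_mod_derived_mulACA.
  - intros x y Hxy. rewrite (Hf _ _ Hxy), (Hf' _ _ Hxy). reflexivity.
Qed.

Lemma npow_hom_mod_derived n : hom_mod_derived (fun g => npow g n).
Proof.
  split.
  - intros x y. induction n as [|n IHn]; simpl.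
    + rewrite gmul1l. reflexivity.
    + rewrite IHn. apply eq_mod_derived_mulACA.
  - intros x y Hxy. induction n as [|n IHn]; simpl.
    + reflexivity.
    + apply gmul_eq_mod_derived; assumption.
Qed.

Lemma zpow_hom_mod_derived n : hom_mod_derived (fun g => zpow g n).
Proof.
  destruct n as [|p|p]; simpl.
  - split; [intros; rewrite gmul1l|intros ? ? ?]; reflexivity.
  - apply npow_hom_mod_derived.
  - destruct (npow_hom_mod_derived (Pos.to_nat p)) as [HM Hp]. split.
    + intros x y. rewrite HM, invMg. apply eq_mod_derived_mulC.
    + intros x y Hxy. rewrite (Hp _ _ Hxy). reflexivity.
Qed.

Lemma expr_act_hom_mod_derived (al : list (Z * (G -> G))) :
  expr_ok al -> hom_mod_derived (expr_act al).
Proof.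
  induction 1 as [|[n phi] al Hphi _ IHal]; simpl.
  - split; [intros; rewrite gmul1l|intros ? ? ?]; reflexivity.
  - apply (hom_mod_derived_pmul (fun g => phi (zpow g n))); [|exact IHal].
    apply hom_mod_derived_comp; [apply endo_hom_mod_derived, Hphi|apply zpow_hom_mod_derived].
Qed.

Record conj_hom_ab (k : G -> G) : Prop := {
  conj_homM : forall x y h, conj (k (x ** y)) h = conj (k x) (conj (k y) h);
  conj_hom_derived : forall d h, derived d -> conj (k d) h = h
}.

Lemma endo_comp_conj_hom_ab psi f :
  is_endo psi -> (forall d, derived d -> in_center (psi d)) ->
  hom_mod_derived f -> conj_hom_ab (fun g => psi (f g)).
Proof.
  intros Hpsi Hcen Hf. split.
  - intros x y h.
    rewrite (conj_by_endo_eq_mod_derived _ _ _ _ Hpsi Hcen (hom_mod_derivedM _ Hf x y)), Hpsi.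
    apply conj_by_mul.
  - intros d h Hd.
    assert (Hfd : f d ≡ 1).
    { rewrite <- (hom_mod_derived1 _ Hf). apply (hom_mod_derived_proper _ Hf).
      unfold eq_mod_derived. rewrite invg1, gmul1r. exact Hd. }
    rewrite (conj_by_endo_eq_mod_derived _ _ _ _ Hpsi Hcen Hfd), endo1 by exact Hpsi.
    apply conj_by1.
Qed.

Section ConjHom.
Variable k : G -> G.
Hypothesis Hk : conj_hom_ab k.

Lemma conj_hom_eq_mod_derived x y h : x ≡ y -> conj (k x) h = conj (k y) h.
Proof.
  intro Hxy. replace x with ((x ** y^-1) ** y) by gsimpl.
  rewrite (conj_homM _ Hk). apply (conj_hom_derived _ Hk), Hxy.
Qed.

Lemma conj_hom_conj l x h : conj (k (conj l x)) h = conj (k x) h.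
Proof. apply conj_hom_eq_mod_derived, eq_mod_derived_conj. Qed.

Lemma conj_hom_comm x y h : conj (k x) (conj (k y) h) = conj (k y) (conj (k x) h).
Proof. rewrite <- !(conj_homM _ Hk). apply conj_hom_eq_mod_derived, eq_mod_derived_mulC. Qed.

Lemma conj_homV x h : conj (k x^-1) h = conj (k x)^-1 h.
Proof.
  rewrite <- (conj_byKV (k x) h) at 1.
  rewrite <- (conj_homM _ Hk), gmulVl. apply (conj_hom_derived _ Hk), gen_one.
Qed.

Lemma conj_hom_group (op : G -> G -> G) :
  (forall g h, op g h = g ** conj (k g) h) ->
  is_group_op op 1 (fun g => conj (k g)^-1 g^-1).
Proof.
  intro opE. split; intros; rewrite ?opE.
  - rewrite conj_mul, (conj_homM _ Hk), conj_hom_conj, gmulA. reflexivity.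
  - rewrite (conj_hom_derived _ Hk) by apply gen_one. apply gmul1l.
  - unfold conj; gsimpl.
  - rewrite conj_hom_conj, conj_homV, <- conj_mul, gmulVl. unfold conj; gsimpl.
  - rewrite conj_byKV. apply gmulVr.
Qed.

End ConjHom.

Lemma conj_hom_skew_brace (k m : G -> G) (dot circ : G -> G -> G) :
  conj_hom_ab k -> conj_hom_ab m ->
  (forall g h, dot g h = g ** conj (k g) h) ->
  (forall g h, circ g h = g ** conj (m g) h) ->
  (forall x y h, conj (k x) (conj (m y) h) = conj (m y) (conj (k x) h)) ->
  skew_left_brace dot circ.
Proof.
  intros Hk Hm dotE circE Hkm.
  exists 1, (fun g => conj (k g)^-1 g^-1).
  split; [apply conj_hom_group; assumption|].
  split; [eexists; eexists; apply conj_hom_group; eassumption|].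
  intros a b c. rewrite !dotE, !circE.
  set (X := a ** conj (m a) b).
  assert (HX : forall h, conj (k X) h = conj (k a) (conj (k b) h)).
  { intro h. unfold X. rewrite (conj_homM _ Hk), conj_hom_conj by exact Hk. reflexivity. }
  assert (HXa : forall h, conj (k (X ** conj (k X) (conj (k a)^-1 a^-1))) h = conj (k b) h).
  { intro h.
    rewrite (conj_homM _ Hk), !conj_hom_conj, conj_homV, HX, conj_hom_comm, conj_byKV
      by exact Hk.
    reflexivity. }
  rewrite HXa, HX, conj_hom_comm, conj_byKV by exact Hk.
  rewrite <- gmulA, <- conj_mul, mulKg, conj_mul, <- Hkm. unfold X. gsimpl.
Qed.

End SkewBraces.

Theorem theorem3p3 (G : Grp) (nonab : ~ @is_abelian G)
  (psi psi' : G -> G) (Hpsi : is_endo psi) (Hpsi' : is_endo psi')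
  (H1 : forall x, derived x -> in_center (psi x))
  (H2 : forall x, derived x -> in_center (psi' x))
  (H3 : forall x, comm_images psi psi' x -> in_center x)
  (alpha beta : list (Z * (G -> G))) (Ha : expr_ok alpha) (Hb : expr_ok beta) :
  skew_left_brace (brace_op psi alpha) (brace_op psi' beta).
Proof.
  apply (conj_hom_skew_brace (fun g => psi (expr_act alpha g))
                             (fun g => psi' (expr_act beta g))).
  - apply endo_comp_conj_hom_ab, expr_act_hom_mod_derived; assumption.
  - apply endo_comp_conj_hom_ab, expr_act_hom_mod_derived; assumption.
  - apply brace_opE.
  - apply brace_opE.
  - intros x y h. apply conj_by_comm, H3, gen_in. eauto.
Qed.
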